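(* For a space $X$ the following are equivalent: (1) $X$ is $L$-selective; (2) $X$ is $S_2$-selective; (3) $X$ is $S_\omega$-selective.
   Context: All spaces are assumed $T_1$. For spaces $Y$, $X$, a map $\varphi:Y\to\mathcal P(X)\setminus\{\emptyset\}$ is lower semicontinuous (l.s.c.) if $\{y:\varphi(y)\cap U\neq\emptyset\}$ is open in $Y$ for every open $U\subseteq X$; a selection is a map $f:Y\to X$ with $f(y)\in\varphi(y)$ for all $y$. $X$ is $Y$-selective if every l.s.c. map from $Y$ to the nonempty closed subsets of $X$ has a continuous selection; $L$-selective means $(\omega+1)$-selective, with $\omega+1$ carrying the order topology. The sequential fan $S_\omega$ is the quotient of the topological sum of countably many convergent sequences (with limits) obtained by identifying all limit points. Arens' space $S_2=\{x\}\cup\{x_n:n\in\omega\}\cup\{x_{n,m}:n,m\in\omega\}$: each $x_{n,m}$ is isolated; a neighborhood base at $x_n$ consists of the sets $\{x_n\}\cup\{x_{n,m}:m\in\omega\setminus K\}$, $K$ finite; a neighborhood base at $x$ consists of the sets $\{x\}\cup\{x_n:n\in\omega\setminus K\}\cup\{x_{n,m}:n\in\omega\setminus K,\ m>f(n)\}$ with $K$ finite and $f:\omega\to\omega$. *)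

From mathcomp Require Import all_boot.
From mathcomp Require Import all_classical topology.
Set Implicit Arguments. Unset Strict Implicit. Unset Printing Implicit Defensive.
Local Open Scope classical_set_scope.

Definition lsc (Y : Type) (openY : set (set Y)) (X : topologicalType)
  (phi : Y -> set X) : Prop :=
  forall U : set X, open U -> openY [set y | phi y `&` U !=set0].

Definition cont_from (Y : Type) (openY : set (set Y)) (X : topologicalType)
  (f : Y -> X) : Prop :=
  forall U : set X, open U -> openY (f @^-1` U).

Definition selective (Y : Type) (openY : set (set Y)) (X : topologicalType) : Prop :=
  forall phi : Y -> set X,
    (forall y, phi y !=set0 /\ closed (phi y)) ->
    lsc openY phi ->
    exists f : Y -> X, cont_from openY f /\ forall y, phi y (f y).

Definition open_from_base (Y : Type) (B : Y -> set (set Y)) (A : set Y) : Prop :=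
  forall y, A y -> exists2 V, B y V & V `<=` A.

(* None is the point omega, Some n is the natural number n. *)
Definition omega1_base (y : option nat) : set (set (option nat)) :=
  match y with
  | Some n => [set [set Some n]]
  | None => [set V | exists k : nat,
               V = [set z | match z with None => True | Some m => (k <= m)%N end]]
  end.
Definition omega1_open := open_from_base omega1_base.

Definition L_selective (X : topologicalType) := selective omega1_open X.

Inductive S2pt : Type :=
  | S2x : S2pt
  | S2n : nat -> S2pt
  | S2nm : nat -> nat -> S2pt.

Definition S2_base (y : S2pt) : set (set S2pt) :=
  match y with
  | S2nm n m => [set [set S2nm n m]]
  | S2n n => [set V | exists K : set nat, finite_set K /\
               V = [set z | z = S2n n \/ exists m, ~ K m /\ z = S2nm n m]]
  | S2x => [set V | exists (K : set nat) (f : nat -> nat), finite_set K /\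
               V = [set z | z = S2x \/ (exists n, ~ K n /\ z = S2n n)
                            \/ exists n m, ~ K n /\ (f n < m)%N /\ z = S2nm n m]]
  end.
Definition S2_open := open_from_base S2_base.

Definition S2_selective (X : topologicalType) := selective S2_open X.

(* Topological sum of countably many copies of omega+1 (each a convergent
   sequence with its limit): points (n, t), t : option nat. *)
Definition sum_open (A : set (nat * option nat)) : Prop :=
  forall n, omega1_open [set t | A (n, t)].

(* Points of S_omega: None = the common limit point, Some (n,m) = m-th term of
   the n-th sequence.  The quotient map identifies all limit points. *)
Definition Sw_quot (p : nat * option nat) : option (nat * nat) :=
  match p.2 with None => None | Some m => Some (p.1, m) end.

Definition Sw_open (A : set (option (nat * nat))) : Prop :=
  sum_open (Sw_quot @^-1` A).

Definition Sw_selective (X : topologicalType) := selective Sw_open X.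

From mathcomp Require Import all_boot.
From mathcomp Require Import all_classical topology.
From mathcomp Require Import finmap.
Set Implicit Arguments. Unset Strict Implicit. Unset Printing Implicit Defensive.
Local Open Scope classical_set_scope.

(* The sequential spaces S_2 and S_omega both retract onto omega+1 (collapse
   x_{n,m} to x_n, resp. send all but the first sequence to the limit point),
   and selectivity passes to retracts; this gives (2) -> (1) and (3) -> (1).
   Conversely, L-selectivity applied to the map equal to {p} at omega and to
   phi n at n (closed since X is T_1) shows: if closed sets phi n eventually
   meet every neighbourhood of p, some selection s n of phi n converges to p.
   Continuity on S_2 and S_omega only asks that the defining sequences
   converge, so such selections, taken along the sequences converging to x and
   then to each x_n in S_2 (resp. to the limit point in S_omega), glue to a
   continuous selection. *)

Lemma near_infty_notin_finite (K : set nat) :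
  finite_set K -> \forall n \near \oo, ~ K n.
Proof.
move=> /finite_fsetP[s ->]; exists (\max_(i <- s) i).+1 => // n /= + sn.
by rewrite ltnNge (@leq_bigmax_seq _ _ predT id n sn isT).
Qed.

Lemma cvg_openP (T : topologicalType) (F : set_system T) {FF : Filter F} (p : T) :
  F --> p <-> forall U, open U -> U p -> F U.
Proof.
split=> [Fp U oU Up | FU A]; first exact/Fp/open_nbhs_nbhs.
by rewrite nbhsE => -[B [oB Bp] BA]; apply: filterS BA (FU B oB Bp).
Qed.

Lemma notin_II (k n : nat) : ~ `I_k n -> (k <= n)%N.
Proof. by move=> /negP; rewrite -leqNgt. Qed.

Lemma omega1_openP (A : set (option nat)) :
  omega1_open A <-> (A None -> \forall n \near \oo, A (Some n)).
Proof.
split=> [oA /oA[V [k ->] VA] | HA [n|] An].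
- by exists k => // n kn; apply: VA.
- by exists [set Some n] => // z ->.
- have [k _ Hk] := HA An.
  exists [set z | if z is Some m then (k <= m)%N else True]; first by exists k.
  by case=> [m /Hk|].
Qed.

Lemma S2_openP (A : set S2pt) :
  S2_open A <-> (A S2x -> \forall n \near \oo, A (S2n n)) /\
                (forall n, A (S2n n) -> \forall m \near \oo, A (S2nm n m)).
Proof.
split=> [oA | [Ax An]].
  split=> [/oA[V [K [f [/near_infty_notin_finite fK ->]]] VA] |
           n /oA[V [K [/near_infty_notin_finite fK ->]] VA]].
  - by apply: filterS fK => n Kn; apply: VA; right; left; exists n.
  - by apply: filterS fK => m Km; apply: VA; right; exists m.
case=> [Ax0 | n An0 | n m Anm].
- have [k _ Hk] := Ax Ax0.
  have tail n : exists k', A (S2n n) -> forall m, (k' < m)%N -> A (S2nm n m).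
    have [/An[k' _ Hk'] | nAn] := pselect (A (S2n n)); last by exists 0%N.
    by exists k' => _ m /ltnW /Hk'.
  have [f Hf] := choice tail.
  exists [set z | z = S2x \/ (exists n, ~ `I_k n /\ z = S2n n)
                  \/ exists n m, ~ `I_k n /\ (f n < m)%N /\ z = S2nm n m].
    by exists `I_k, f; split=> //; exact: finite_II.
  have Ank n : ~ `I_k n -> A (S2n n) by move=> /notin_II /Hk.
  by move=> z [-> | [[n [/Ank ? ->]] | [n [m [/Ank /Hf Hfn [/Hfn ? ->]]]]]].
- have [k _ Hk] := An n An0.
  exists [set z | z = S2n n \/ exists m, ~ `I_k m /\ z = S2nm n m].
    by exists `I_k; split=> //; exact: finite_II.
  by move=> z [-> | [m [/notin_II /Hk ? ->]]].
- by exists [set S2nm n m] => // z ->.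
Qed.

Lemma Sw_openP (A : set (option (nat * nat))) :
  Sw_open A <-> (A None -> forall n, \forall m \near \oo, A (Some (n, m))).
Proof.
split=> [oA AN n | HA n]; first by move/omega1_openP: (oA n); apply.
by apply/omega1_openP => /HA /(_ n).
Qed.

Section ContinuityCriteria.
Variable X : topologicalType.

Lemma omega1_contP (g : option nat -> X) :
  cont_from omega1_open g <-> (fun n => g (Some n)) @ \oo --> g None.
Proof.
rewrite cvg_openP; split=> [gc U oU | gcvg U oU]; last exact/omega1_openP/gcvg.
by move/omega1_openP: (gc U oU).
Qed.

Lemma S2_contP (f : S2pt -> X) :
  cont_from S2_open f <->
  (fun n => f (S2n n)) @ \oo --> f S2x /\
  forall n, (fun m => f (S2nm n m)) @ \oo --> f (S2n n).
Proof.
split=> [fc | [/cvg_openP fx fn] U oU].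
  split=> [|n]; apply/cvg_openP => U oU; first by have /S2_openP[] := fc U oU.
  by have /S2_openP[_ +] := fc U oU; apply.
apply/S2_openP; split=> [|n]; first exact: fx.
by move: (fn n) => /cvg_openP; apply.
Qed.

Lemma Sw_contP (f : option (nat * nat) -> X) :
  cont_from Sw_open f <-> forall n, (fun m => f (Some (n, m))) @ \oo --> f None.
Proof.
split=> [fc n | fn U oU].
  by apply/cvg_openP => U oU fU; move/Sw_openP: (fc U oU); apply.
by apply/Sw_openP => fU n; move: (fn n) => /cvg_openP; apply.
Qed.

End ContinuityCriteria.

Lemma selective_retract (Y Z : Type) (openY : set (set Y)) (openZ : set (set Z))
    (X : topologicalType) (r : Y -> Z) (i : Z -> Y) :
  (forall A, openZ A -> openY (r @^-1` A)) ->
  (forall B, openY B -> openZ (i @^-1` B)) -> cancel i r ->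
  selective openY X -> selective openZ X.
Proof.
move=> r_cont i_cont ri HY phi phiP lphi.
have [||g [g_cont g_sel]] := HY (phi \o r); first by move=> y; exact: phiP.
  by move=> U oU; exact: r_cont (lphi U oU).
exists (g \o i); split=> [U oU | z]; first exact: i_cont (g_cont U oU).
by have := g_sel (i z); rewrite /= ri.
Qed.

Definition S2_retract (y : S2pt) : option nat :=
  match y with S2x => None | S2n n | S2nm n _ => Some n end.

Definition S2_embed (t : option nat) : S2pt :=
  if t is Some n then S2n n else S2x.

Lemma S2_retract_cont (A : set (option nat)) :
  omega1_open A -> S2_open (S2_retract @^-1` A).
Proof.
by move=> /omega1_openP oA; apply/S2_openP; split=> // n An; exists 0%N.
Qed.

Lemma S2_embed_cont (B : set S2pt) :
  S2_open B -> omega1_open (S2_embed @^-1` B).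
Proof. by move=> /S2_openP[oB _]; apply/omega1_openP. Qed.

Definition Sw_retract (y : option (nat * nat)) : option nat :=
  if y is Some (0, m) then Some m else None.

Definition Sw_embed (t : option nat) : option (nat * nat) := omap (pair 0%N) t.

Lemma Sw_retract_cont (A : set (option nat)) :
  omega1_open A -> Sw_open (Sw_retract @^-1` A).
Proof.
move=> /omega1_openP oA; apply/Sw_openP => AN [|n] /=; first exact: oA.
by exists 0%N.
Qed.

Lemma Sw_embed_cont (B : set (option (nat * nat))) :
  Sw_open B -> omega1_open (Sw_embed @^-1` B).
Proof. by move=> /Sw_openP oB; apply/omega1_openP => /oB /(_ 0%N). Qed.

Lemma L_selective_of_S2 (X : topologicalType) : S2_selective X -> L_selective X.
Proof.
by apply: (selective_retract S2_retract_cont S2_embed_cont); case.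
Qed.

Lemma L_selective_of_Sw (X : topologicalType) : Sw_selective X -> L_selective X.
Proof.
by apply: (selective_retract Sw_retract_cont Sw_embed_cont); case.
Qed.

Lemma L_selective_cvg_selection (X : topologicalType) :
  accessible_space X -> L_selective X ->
  forall (phi : nat -> set X) (p : X),
  (forall n, phi n !=set0 /\ closed (phi n)) ->
  (forall U, open U -> U p -> \forall n \near \oo, phi n `&` U !=set0) ->
  exists s : nat -> X, (forall n, phi n (s n)) /\ s @ \oo --> p.
Proof.
move=> T1 HL phi p phiP lphi.
pose psi (y : option nat) := if y is Some n then phi n else [set p].
have [||g [/omega1_contP g_cvg g_sel]] := HL psi.
- case=> [n|]; first exact: phiP.
  by split; [exists p | exact: accessible_closed_set1].
- by move=> U oU; apply/omega1_openP => -[_ [-> Up]]; exact: lphi.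
have gp : g None = p := g_sel None.
exists (fun n => g (Some n)); split=> [n|]; first exact: (g_sel (Some n)).
by rewrite -gp.
Qed.

Lemma S2_selective_of_L (X : topologicalType) :
  accessible_space X -> L_selective X -> S2_selective X.
Proof.
move=> T1 HL phi phiP lphi.
have [p px] := (phiP S2x).1.
have [s [s_sel s_cvg]] :
    exists s : nat -> X, (forall n, phi (S2n n) (s n)) /\ s @ \oo --> p.
  apply: (L_selective_cvg_selection T1 HL (phi := phi \o S2n)) => [n|U oU Up].
    exact: phiP.
  by have /S2_openP[+ _] := lphi U oU; apply; exists p.
have tails n : exists t : nat -> X,
    (forall m, phi (S2nm n m) (t m)) /\ t @ \oo --> s n.
  apply: (L_selective_cvg_selection T1 HL (phi := phi \o S2nm n)) => [m|U oU Usn].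
    exact: phiP.
  by have /S2_openP[_ +] := lphi U oU; apply; exists (s n).
have [t tP] := choice tails.
exists (fun y => match y with S2x => p | S2n n => s n | S2nm n m => t n m end).
split; first by apply/S2_contP; split=> [|n]; [exact: s_cvg | exact: (tP n).2].
by case=> [|n|n m] /=; [exact: px | exact: s_sel | exact: (tP n).1].
Qed.

Lemma Sw_selective_of_L (X : topologicalType) :
  accessible_space X -> L_selective X -> Sw_selective X.
Proof.
move=> T1 HL phi phiP lphi.
have [p px] := (phiP None).1.
have seqs n : exists t : nat -> X,
    (forall m, phi (Some (n, m)) (t m)) /\ t @ \oo --> p.
  apply: (L_selective_cvg_selection T1 HL (phi := fun m => phi (Some (n, m)))).
    by move=> m; exact: phiP.
  move=> U oU Up.
  by move/Sw_openP: (lphi U oU); apply; exists p.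
have [t tP] := choice seqs.
exists (fun y => if y is Some (n, m) then t n m else p); split.
  by apply/Sw_contP => n; exact: (tP n).2.
by case=> [[n m]|] //=; exact: (tP n).1.
Qed.

Theorem mainTheorem16 (X : topologicalType) (hT1 : accessible_space X) :
  (L_selective X <-> S2_selective X) /\ (S2_selective X <-> Sw_selective X).
Proof.
split; split; first exact: S2_selective_of_L.
- exact: L_selective_of_S2.
- by move=> /L_selective_of_S2; exact: Sw_selective_of_L.
- by move=> /L_selective_of_Sw; exact: S2_selective_of_L.
Qed.
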